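(* Let $C_\lambda$ be the power-divergence copula and let $\mathcal{Z}(C_\lambda)=\{(u_1,u_2)\in[0,1]^2: C_\lambda(u_1,u_2)=0\}$ be its zero set. (i) If $\lambda\le -1$, then $\mathcal{Z}(C_\lambda)=\{(u_1,0):u_1\in[0,1]\}\cup\{(0,u_2):u_2\in[0,1]\}$. (ii) If $\lambda>-1$, then $\mathcal{Z}(C_\lambda)$ has positive (Lebesgue) area. (iii) As $\lambda\to\infty$, the zero set tends to the triangle $T$ with vertices $(0,0),(0,1),(1,0)$, in the sense that every $(u_1,u_2)\in[0,1]^2$ with $u_1+u_2<1$ belongs to $\mathcal{Z}(C_\lambda)$ for all sufficiently large $\lambda$, and every $(u_1,u_2)\in[0,1]^2$ with $u_1+u_2>1$ does not belong to $\mathcal{Z}(C_\lambda)$ for all sufficiently large $\lambda$; the boundary curve $\phi_\lambda(u_1)+\phi_\lambda(u_2)=\phi_\lambda(0)$ converges to the line $u_1+u_2=1$.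
   Context: For $\lambda\in\mathbb{R}$ define $\phi_\lambda$ on $[0,\infty)$ by $\phi_\lambda(x)=\frac{1}{\lambda(\lambda+1)}(x^{\lambda+1}-x+\lambda(1-x))$ for $\lambda\neq-1,0$; $\phi_0(x)=1-x+x\log x$; $\phi_{-1}(x)=x-1-\log x$; values at $x=0$ are limits, so $\phi_\lambda(0)=1/(\lambda+1)$ for $\lambda>-1$ and $\phi_\lambda(0)=\infty$ for $\lambda\le-1$. On $[0,1]$, $\phi_\lambda$ is convex, strictly decreasing, $\phi_\lambda(1)=0$. The pseudoinverse is $\phi_\lambda^{[-1]}(t)=\phi_\lambda^{-1}(t)$ (inverse of $\phi_\lambda|_{[0,1]}$) for $0\le t<\phi_\lambda(0)$ and $0$ for $t\ge\phi_\lambda(0)$. The power-divergence (PD) copula is $C_\lambda(u_1,u_2)=\phi_\lambda^{[-1]}(\phi_\lambda(u_1)+\phi_\lambda(u_2))$, $u_1,u_2\in[0,1]$ (with $\phi_\lambda^{[-1]}(\infty)=0$). *)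

From HB Require Import structures.
From mathcomp Require Import all_boot all_order all_algebra.
From mathcomp Require Import all_classical all_reals all_analysis.
Set Implicit Arguments. Unset Strict Implicit. Unset Printing Implicit Defensive.
Import Order.TTheory GRing.Theory Num.Theory.
Local Open Scope classical_set_scope.
Local Open Scope ring_scope.

Section PD.
Variable R : realType.

Definition pd_phi (lam x : R) : \bar R :=
  if x == 0 then (if -1 < lam then ((lam + 1)^-1)%:E else +oo%E)
  else if lam == 0 then (1 - x + x * ln x)%:E
  else if lam == -1 then (x - 1 - ln x)%:E
  else ((lam * (lam + 1))^-1 * (x `^ (lam + 1) - x + lam * (1 - x)))%:E.

(* pseudoinverse: inverse of phi_lambda restricted to [0,1] for 0 <= t < phi_lambda(0),
   and 0 for t >= phi_lambda(0) (including t = +oo) *)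
Definition pd_phi_pinv (lam : R) (t : \bar R) : R :=
  if (t < pd_phi lam 0)%E then xget (0:R) [set x : R | 0 <= x <= 1 /\ pd_phi lam x = t] else 0.

Definition pd_copula (lam u1 u2 : R) : R :=
  pd_phi_pinv lam (pd_phi lam u1 + pd_phi lam u2)%E.

Definition pd_zero_set (lam : R) : set (R * R) :=
  [set p | 0 <= p.1 <= 1 /\ 0 <= p.2 <= 1 /\ pd_copula lam p.1 p.2 = 0].

Definition leb2 : set (R * R) -> \bar R :=
  ((@lebesgue_measure R) \x (@lebesgue_measure R))%E.

End PD.

(* Write phi for phi_lambda.  By Bernoulli's inequality phi >= 0 on (0, 1]; it
   vanishes at 1, is continuous on (0, 1], and near 0 it exceeds every value
   below phi(0): it blows up when lambda <= -1, and phi(0) - phi(x) = O(x^b) for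
   some b > 0 otherwise.  The intermediate value theorem then shows that
   C(u1, u2) = 0 exactly when phi(u1) + phi(u2) >= phi(0).  For lambda <= -1,
   phi(0) = +oo forces a zero coordinate; for lambda > -1 the condition holds on
   a whole square [0, d]^2.  For lambda > 0,
     lambda (lambda + 1) (phi(u1) + phi(u2) - phi(0))
       = u1^(lambda+1) + u2^(lambda+1) + lambda - (lambda + 1) (u1 + u2),
   whose two power terms lie in [0, 1]; this pins the zero set and its boundary
   to within 1 / (lambda + 1) of the diagonal u1 + u2 = 1. *)

From HB Require Import structures.
From mathcomp Require Import all_boot all_order all_algebra.
From mathcomp Require Import all_classical all_reals all_analysis.
From mathcomp Require Import ring lra.
From mathcomp Require Import measurable_realfun.
Import Order.TTheory GRing.Theory Num.Theory.
Import numFieldNormedType.Exports.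
Local Open Scope classical_set_scope.
Local Open Scope ring_scope.

Section PowerDivergence.
Variable R : realType.
Implicit Types (lam x t e : R).

Lemma ln_le_subr1 x : 0 < x -> ln x <= x - 1.
Proof. by move=> x0; have := @le_ln1Dx R (x - 1); rewrite (addrC 1) subrK; apply; lra. Qed.

Lemma subr1_le_mul_ln x : 0 < x -> x - 1 <= x * ln x.
Proof.
move=> x0; have := ln_le_subr1 x^-1; rewrite invr_gt0 lnV ?posrE // => /(_ x0) h.
have : x * (- ln x) <= x * (x^-1 - 1) by rewrite ler_pM2l.
by rewrite mulrBr mulfV ?gt_eqF //; lra.
Qed.

Lemma powRE x a : 0 < x -> x `^ a = expR (a * ln x).
Proof. by move=> x0; rewrite /powR gt_eqF. Qed.

Lemma bernoulli_powR_ge x a : 0 < x -> a <= 0 \/ 1 <= a -> 1 + a * (x - 1) <= x `^ a.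
Proof.
move=> x0 [a_le0|a_ge1].
  have := expR_ge1Dx (a * ln x); rewrite -powRE //.
  have := ln_le_subr1 _ x0; nra.
have := expR_ge1Dx ((a - 1) * ln x); rewrite -powRE // => h.
rewrite -(mulr_powRB1 (ltW x0)); last lra.
have : x * (1 + (a - 1) * ln x) <= x * x `^ (a - 1) by rewrite ler_pM2l.
have := subr1_le_mul_ln _ x0; nra.
Qed.

Lemma bernoulli_powR_le x a : 0 < x -> 0 <= a <= 1 -> x `^ a <= 1 + a * (x - 1).
Proof.
move=> x0 /andP[a0 a1]; have [->|a_neq0] := eqVneq a 0; first by rewrite powRr0; lra.
have a_gt0 : 0 < a by rewrite lt_neqAle eq_sym a_neq0.
have := @bernoulli_powR_ge (x `^ a) a^-1 (powR_gt0 _ x0).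
rewrite -powRrM mulfV // (powRr1 (ltW x0)) => /(_ (or_intror _)).
rewrite invf_ge1 // => /(_ a1) h.
have : a * (1 + a^-1 * (x `^ a - 1)) <= a * x by rewrite ler_pM2l.
by rewrite mulrDr mulrA mulfV // mul1r; lra.
Qed.

Definition pd_phir lam : R -> R :=
  if lam == 0 then fun x => 1 - x + x * ln x
  else if lam == -1 then fun x => x - 1 - ln x
  else fun x => (lam * (lam + 1))^-1 * (x `^ (lam + 1) - x + lam * (1 - x)).

Lemma pd_phirE lam x : lam != 0 -> lam != -1 ->
  pd_phir lam x = (lam * (lam + 1))^-1 * (x `^ (lam + 1) - x + lam * (1 - x)).
Proof. by rewrite /pd_phir => /negbTE -> /negbTE ->. Qed.

Lemma pd_phiE lam x : x != 0 -> pd_phi lam x = (pd_phir lam x)%:E.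
Proof. by rewrite /pd_phi /pd_phir => /negbTE ->; case: (lam == 0); case: (lam == -1). Qed.

Lemma pd_phi0_infty lam : lam <= -1 -> pd_phi lam 0 = +oo%E.
Proof. by rewrite /pd_phi eqxx ltNge => ->. Qed.

Lemma pd_phir0 lam : -1 < lam -> pd_phir lam 0 = (lam + 1)^-1.
Proof.
move=> lam_gt; have [->|lam0] := eqVneq lam 0.
  by rewrite /pd_phir eqxx mul0r subr0 addr0 add0r invr1.
have lam1 : lam != -1 by rewrite gt_eqF.
have a0 : lam + 1 != 0 by rewrite addr_eq0.
by rewrite pd_phirE // powR0 //; field; rewrite lam0 a0.
Qed.

Lemma pd_phi_fin lam x : -1 < lam -> pd_phi lam x = (pd_phir lam x)%:E.
Proof.
move=> lam_gt; have [->|x0] := eqVneq x 0; last exact: pd_phiE.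
by rewrite /pd_phi eqxx lam_gt pd_phir0.
Qed.

Lemma pd_phir1 lam : pd_phir lam 1 = 0.
Proof.
rewrite /pd_phir; case: ifP => _; first by rewrite ln1; lra.
by case: ifP => _; rewrite ?ln1 ?powR1; lra.
Qed.

Lemma pd_phir_ge0 lam x : 0 < x -> 0 <= pd_phir lam x.
Proof.
move=> x0; rewrite /pd_phir.
case: ifP => _; first by have := subr1_le_mul_ln _ x0; lra.
case: ifP => _; first by have := ln_le_subr1 _ x0; lra.
set a := lam + 1.
have -> : x `^ a - x + lam * (1 - x) = x `^ a - (1 + a * (x - 1)) by rewrite /a; ring.
have [lam_le|lam_gt] := leP lam (-1).
  apply: mulr_ge0; first by rewrite invr_ge0 /a; nra.
  by rewrite subr_ge0; apply: bernoulli_powR_ge => //; left; rewrite /a; lra.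
have [lam_le0|lam_gt0] := leP lam 0.
  apply: mulr_le0; first by rewrite invr_le0 /a; nra.
  by rewrite subr_le0; apply: bernoulli_powR_le; rewrite // /a; apply/andP; split; lra.
apply: mulr_ge0; first by rewrite invr_ge0 /a; nra.
by rewrite subr_ge0; apply: bernoulli_powR_ge => //; right; rewrite /a; lra.
Qed.

Lemma pd_phi_ge0 lam x : 0 <= x -> (0 <= pd_phi lam x)%E.
Proof.
move=> x_ge0; have [->|x0] := eqVneq x 0.
  rewrite /pd_phi eqxx; case: ifP => [lam_gt|_]; last exact: leey.
  by rewrite lee_fin invr_ge0; lra.
by rewrite pd_phiE // lee_fin pd_phir_ge0 // lt_neqAle eq_sym x0.
Qed.

Lemma continuous_pd_phir lam x : 0 < x -> {for x, continuous (pd_phir lam)}.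
Proof.
move=> x0; have powR_cont (a : R) : {for x, continuous (fun y : R => y `^ a)}.
  apply: differentiable_continuous; apply/derivable1_diffP.
  by apply: derivable_powR; rewrite in_itv /= x0.
rewrite /pd_phir; case: ifP => _.
  apply: cvgD; first apply: cvgB; [exact: cvg_cst| exact: cvg_id|].
  by apply: cvgM; [exact: cvg_id| exact: continuous_ln].
case: ifP => _.
  apply: cvgB; last exact: continuous_ln.
  by apply: cvgB; [exact: cvg_id| exact: cvg_cst].
apply: cvgM; first exact: cvg_cst.
apply: cvgD; first apply: cvgB; [exact: powR_cont| exact: cvg_id|].
by apply: cvgM; [exact: cvg_cst| apply: cvgB; [exact: cvg_cst| exact: cvg_id]].
Qed.

Lemma measurable_pd_phir lam : measurable_fun setT (pd_phir lam).
Proof.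
rewrite /pd_phir; case: ifP => _; [|case: ifP => _].
- apply: measurable_funD; first exact: measurable_funB.
  by apply: measurable_funM => //; exact: measurable_ln.
- by apply: measurable_funB; [exact: measurable_funB| exact: measurable_ln].
- apply: measurable_funM => //; apply: measurable_funD.
    by apply: measurable_funB => //; exact: measurable_powR.
  by apply: measurable_funM => //; exact: measurable_funB.
Qed.

Lemma pd_phir_sub0 lam x : lam != 0 -> -1 < lam ->
  pd_phir lam x - pd_phir lam 0 = (x `^ (lam + 1) - (lam + 1) * x) / (lam * (lam + 1)).
Proof.
move=> lam0 lam_gt; have lam1 : lam != -1 by rewrite gt_eqF.
have a0 : lam + 1 != 0 by rewrite gt_eqF //; lra.
by rewrite pd_phir0 // pd_phirE //; field; rewrite lam0 a0.
Qed.

Lemma pd_phir_ge_sub_powR lam : -1 < lam -> exists C b, [/\ 0 < C, 0 < b &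
  forall x, 0 <= x -> pd_phir lam 0 - C * x `^ b <= pd_phir lam x].
Proof.
move=> lam_gt; suff [C [b [C0 b0 Cb]]] : exists C b, [/\ 0 < C, 0 < b &
    forall x, 0 < x -> pd_phir lam 0 - C * x `^ b <= pd_phir lam x].
  exists C, b; split => // x; rewrite le_eqVlt => /predU1P[<-|]; last exact: Cb.
  by rewrite powR0 ?gt_eqF // mulr0 subr0.
have [->|lam0] := eqVneq lam 0.
  exists 2, 2^-1; split => // x x0; rewrite (powR12_sqrt (ltW x0)) pd_phir0 // add0r invr1.
  set s := Num.sqrt x; have s0 : 0 < s by rewrite sqrtr_gt0.
  have ss : x = s * s by rewrite -expr2 sqr_sqrtr // ltW.
  have := subr1_le_mul_ln _ s0.
  (* [x ln x = 2 s^2 ln s >= 2 (s^2 - s)] *)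
  rewrite /pd_phir eqxx ss lnM ?posrE //; nra.
have a0 : 0 < lam + 1 by lra.
have [lam_gt0|lam_le0] := ltP 0 lam.
  exists lam^-1, 1; split; rewrite ?invr_gt0 // => x x0.
  have := pd_phir_sub0 lam x lam0 lam_gt; rewrite (powRr1 (ltW x0)).
  suff : - (lam^-1 * x) <= (x `^ (lam + 1) - (lam + 1) * x) / (lam * (lam + 1)) by lra.
  have -> : - (lam^-1 * x) = - ((lam + 1) * x) / (lam * (lam + 1)).
    by field; rewrite lam0 gt_eqF.
  by rewrite ler_pM2r ?invr_gt0 ?mulr_gt0 //; have := powR_ge0 x (lam + 1); lra.
have lam_a : 0 < - (lam * (lam + 1)) by nra.
exists (- (lam * (lam + 1)))^-1, (lam + 1); split; rewrite ?invr_gt0 // => x x0.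
have := pd_phir_sub0 lam x lam0 lam_gt.
have -> : (x `^ (lam + 1) - (lam + 1) * x) / (lam * (lam + 1)) =
    - ((- (lam * (lam + 1)))^-1 * x `^ (lam + 1)) + (lam + 1) * x / (- (lam * (lam + 1))).
  by field; rewrite lam0 gt_eqF.
have : 0 <= (lam + 1) * x / (- (lam * (lam + 1))).
  by apply: divr_ge0; [apply: mulr_ge0; lra| lra].
lra.
Qed.

Lemma pd_phir_near0 lam e : -1 < lam -> 0 < e ->
  exists2 d, 0 < d <= 1 & forall x, 0 <= x <= d -> pd_phir lam 0 - e <= pd_phir lam x.
Proof.
move=> lam_gt e0; have [C [b [C0 b0 Cb]]] := pd_phir_ge_sub_powR _ lam_gt.
have eC0 : 0 <= e / C by rewrite divr_ge0 ?ltW.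
exists (Num.min 1 ((e / C) `^ b^-1)).
  by rewrite lt_min ltr01 powR_gt0 ?divr_gt0 // ge_min lexx.
move=> x /andP[x0]; rewrite le_min => /andP[_ xd].
have : x `^ b <= e / C.
  rewrite -[leRHS](powRr1 eC0) -(mulVf (lt0r_neq0 b0)) powRrM.
  by apply: ge0_ler_powR; rewrite ?nnegrE ?powR_ge0 // ltW.
rewrite ler_pdivlMr // => Cx; have := Cb x x0; lra.
Qed.

Lemma pd_phir_unbounded0 lam t : lam <= -1 -> 0 <= t ->
  exists2 x, 0 < x <= 1 & t <= pd_phir lam x.
Proof.
move=> lam_le t0; have lam0 : lam != 0 by rewrite lt_eqF //; lra.
have [lam1|lam1] := eqVneq lam (-1).
  exists (expR (- (t + 1))); first by rewrite expR_gt0 expR_le1; lra.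
  rewrite /pd_phir (negbTE lam0) lam1 eqxx expRK.
  by have := expR_gt0 (- (t + 1)); lra.
set a := lam + 1; have a0 : a < 0 by rewrite /a; rewrite lt_neqAle in lam1 *; lra.
have K0 : 0 < lam * a by nra.
set M := t * (lam * a) + 2 - lam; have M1 : 1 <= M by rewrite /M; nra.
(* [x := M ^ (1/a)] makes the dominant term [x ^ a] of [pd_phir] equal to [M] *)
exists (M `^ a^-1).
  rewrite powR_gt0 /=; last lra.
  by rewrite -(powRr0 M); apply: ler_powR => //; rewrite invr_le0; lra.
rewrite pd_phirE // -/a -powRrM mulVf ?lt_eqF // powRr1; last lra.
have := powR_ge0 M a^-1; rewrite ler_pdivlMl // /M; nra.
Qed.

Lemma pd_phir_large_near0 lam t : 0 <= t -> (t%:E < pd_phi lam 0)%E ->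
  exists2 x, 0 < x <= 1 & t <= pd_phir lam x.
Proof.
move=> t0; have [lam_le _|lam_gt] := leP lam (-1); first exact: pd_phir_unbounded0.
rewrite pd_phi_fin // lte_fin -subr_gt0 => t_lt.
have [d /andP[d0 d1] phi_ge] := pd_phir_near0 _ _ lam_gt t_lt; exists d; first by rewrite d0.
by have := phi_ge d; rewrite lexx ltW //= => /(_ isT); lra.
Qed.

Lemma pd_phir_onto lam t : 0 <= t -> (t%:E < pd_phi lam 0)%E ->
  exists2 c, 0 < c <= 1 & pd_phir lam c = t.
Proof.
move=> t0 t_lt; have [x /andP[x0 x1] tx] := pd_phir_large_near0 _ _ t0 t_lt.
have [c] : exists2 c, c \in `[x, 1] & pd_phir lam c = t.
  apply: IVT => //; last by rewrite pd_phir1 ge_min le_max tx t0 orbT.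
  apply: continuous_in_subspaceT => y; rewrite inE /= in_itv /= => /andP[xy _].
  by apply: continuous_pd_phir; apply: lt_le_trans xy.
by rewrite in_itv /= => /andP[xc c1] <-; exists c; rewrite // c1 (lt_le_trans x0).
Qed.

Lemma pd_phi_pinv_eq0 lam (t : \bar R) : (0 <= t)%E ->
  pd_phi_pinv lam t = 0 <-> (pd_phi lam 0 <= t)%E.
Proof.
move=> t0; split; last by rewrite /pd_phi_pinv leNgt => /negbTE ->.
rewrite leNgt; apply: contraPN => t_lt.
case: t t0 t_lt => [r| |]; [|by move=> _; rewrite ltNge leey|by rewrite leeNy_eq].
rewrite lee_fin => r0 r_lt; have [c /andP[c0 c1] cr] := pd_phir_onto _ _ r0 r_lt.
rewrite /pd_phi_pinv r_lt; set P := [set x : R | _].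
have [_ Px] : P (xget 0 P).
  by apply: xgetPex; exists c; rewrite /P /= (ltW c0) c1 pd_phiE ?cr // gt_eqF.
by move=> x_eq0; move: r_lt; rewrite -Px x_eq0 ltxx.
Qed.

Lemma pd_zero_setE lam : pd_zero_set lam =
  [set p | 0 <= p.1 <= 1 /\ 0 <= p.2 <= 1 /\
           (pd_phi lam 0 <= pd_phi lam p.1 + pd_phi lam p.2)%E].
Proof.
have sum_ge0 (u1 u2 : R) : 0 <= u1 -> 0 <= u2 -> (0 <= pd_phi lam u1 + pd_phi lam u2)%E.
  by move=> u1_ge0 u2_ge0; rewrite adde_ge0 ?pd_phi_ge0.
apply/seteqP; split=> -[u1 u2]; rewrite /pd_zero_set /= => -[u1_01 [u2_01 h]];
  do 2!split => //; case/andP: u1_01 u2_01 => [u1_ge0 _] /andP[u2_ge0 _].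
  exact: (iffLR (pd_phi_pinv_eq0 _ _ (sum_ge0 _ _ u1_ge0 u2_ge0)) h).
exact: (iffRL (pd_phi_pinv_eq0 _ _ (sum_ge0 _ _ u1_ge0 u2_ge0)) h).
Qed.

Lemma pd_zero_set_le_m1 lam : lam <= -1 -> pd_zero_set lam =
  [set p | 0 <= p.1 <= 1 /\ p.2 = 0] `|` [set p | p.1 = 0 /\ 0 <= p.2 <= 1].
Proof.
move=> lam_le; rewrite pd_zero_setE pd_phi0_infty //.
apply/seteqP; split=> -[u1 u2] /=.
  move=> [u1_01 [u2_01]]; rewrite leye_eq.
  have [->|u1_neq0] := eqVneq u1 0; first by right.
  have [->|u2_neq0] := eqVneq u2 0; first by left.
  by rewrite !pd_phiE // -EFinD.
have phi_neqNy x : 0 <= x -> pd_phi lam x != -oo%E.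
  by move=> x_ge0; rewrite -ltNye (lt_le_trans ltNy0) ?pd_phi_ge0.
case=> [[/andP[u1_ge0 u1_le1] ->]|[-> /andP[u2_ge0 u2_le1]]].
  by rewrite pd_phi0_infty // addey ?phi_neqNy // u1_ge0 u1_le1 lexx ler01.
by rewrite pd_phi0_infty // addye ?phi_neqNy // u2_ge0 u2_le1 lexx ler01.
Qed.

Lemma pd_zero_set_gt_m1 lam : -1 < lam -> pd_zero_set lam =
  (`[0, 1]%classic `*` `[0, 1]%classic) `&`
  (fun p => pd_phir lam p.1 + pd_phir lam p.2) @^-1` `[pd_phir lam 0, +oo[%classic.
Proof.
move=> lam_gt; rewrite pd_zero_setE.
apply/seteqP; split=> -[u1 u2] /=; rewrite !in_itv /= !pd_phi_fin // -EFinD lee_fin andbT.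
  by move=> [? [? ?]].
by move=> [[? ?] ?].
Qed.

Lemma measurable_pd_zero_set lam : -1 < lam -> measurable (pd_zero_set lam).
Proof.
move=> lam_gt; rewrite pd_zero_set_gt_m1 //; apply: measurableI.
  by apply: measurableX; exact: measurable_itv.
rewrite -[X in measurable X]setTI; apply: measurable_funD => //.
  exact: measurableT_comp (measurable_pd_phir lam) measurable_fst.
exact: measurableT_comp (measurable_pd_phir lam) measurable_snd.
Qed.

Lemma pd_zero_set_area_gt0 lam : -1 < lam -> (0 < leb2 (pd_zero_set lam))%E.
Proof.
move=> lam_gt; have half_gt0 : 0 < pd_phir lam 0 / 2.
  by rewrite divr_gt0 // pd_phir0 // invr_gt0; lra.
have [d /andP[d0 d1] phi_ge] := pd_phir_near0 _ _ lam_gt half_gt0.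
(* near [0, 0] both terms of the sum are at least [phi(0) / 2] *)
have box_sub : `[0, d]%classic `*` `[0, d]%classic `<=` pd_zero_set lam.
  rewrite pd_zero_set_gt_m1 // => -[u1 u2] /=; rewrite !in_itv /= andbT.
  move=> [/andP[u1_ge0 u1_le] /andP[u2_ge0 u2_le]].
  have := phi_ge u1; have := phi_ge u2; rewrite u1_ge0 u1_le u2_ge0 u2_le /=.
  by move=> /(_ isT) h2 /(_ isT) h1; rewrite !(le_trans _ d1) //; split => //; lra.
have side_gt0 : (0 < @lebesgue_measure R `[0%R, d]%classic)%E.
  by rewrite lebesgue_measure_itv /= lte_fin d0 -EFinD subr0 lte_fin.
apply: (@lt_le_trans _ _ (leb2 (`[0, d]%classic `*` `[0, d]%classic))).
  rewrite /leb2 product_measure1E; try exact: measurable_itv.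
  exact: (mule_gt0 side_gt0 side_gt0).
rewrite /leb2; apply: le_measure => //; rewrite inE.
  by apply: measurableX; exact: measurable_itv.
exact: measurable_pd_zero_set.
Qed.

Lemma powR_le1 x b : 0 <= x <= 1 -> 0 <= b -> x `^ b <= 1.
Proof.
move=> /andP[x0 x1] b0; rewrite /powR; case: ifP => _; first by case: (b == 0).
by rewrite expR_le1 mulr_ge0_le0 // ln_le0.
Qed.

Lemma pd_phir_le_phir0 lam x : 0 < lam -> 0 <= x <= 1 -> pd_phir lam x <= pd_phir lam 0.
Proof.
move=> lam_gt0 x01; rewrite -subr_le0 pd_phir_sub0 ?gt_eqF //; last lra.
have : x `^ (lam + 1) <= x.
  have [->|x_neq0] := eqVneq x 0; first by rewrite powR0 // gt_eqF //; lra.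
  by apply: ge1r_powR; [rewrite lt_neqAle eq_sym x_neq0 | lra].
case/andP: x01 => x0 _ h; rewrite pmulr_lle0 ?invr_gt0 ?mulr_gt0 //; nra.
Qed.

Lemma pd_phir_excess_bounds lam (u1 u2 : R) : 0 < lam -> 0 <= u1 <= 1 -> 0 <= u2 <= 1 ->
  lam - (lam + 1) * (u1 + u2)
    <= lam * (lam + 1) * (pd_phir lam u1 + pd_phir lam u2 - pd_phir lam 0)
    <= lam + 2 - (lam + 1) * (u1 + u2).
Proof.
move=> lam_gt0 u1_01 u2_01; have lam_gt : -1 < lam by lra.
have -> : lam * (lam + 1) * (pd_phir lam u1 + pd_phir lam u2 - pd_phir lam 0) =
    u1 `^ (lam + 1) + u2 `^ (lam + 1) + lam - (lam + 1) * (u1 + u2).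
  rewrite (_ : _ - _ = (pd_phir lam u1 - pd_phir lam 0) + (pd_phir lam u2 - pd_phir lam 0)
    + pd_phir lam 0); last by ring.
  rewrite !pd_phir_sub0 ?gt_eqF // pd_phir0 //; field.
  by rewrite !gt_eqF //; lra.
have a_ge0 : 0 <= lam + 1 by lra.
have := powR_le1 u1 _ u1_01 a_ge0; have := powR_le1 u2 _ u2_01 a_ge0.
have := powR_ge0 u1 (lam + 1); have := powR_ge0 u2 (lam + 1).
by move=> *; apply/andP; split; lra.
Qed.

Lemma pd_zero_set_below_diag (u1 u2 : R) : 0 <= u1 <= 1 -> 0 <= u2 <= 1 -> u1 + u2 < 1 ->
  exists L, forall lam, L < lam -> pd_zero_set lam (u1, u2).
Proof.
move=> u1_01 u2_01 s_lt1; have gap : 0 < 1 - (u1 + u2) by lra.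
exists ((u1 + u2) / (1 - (u1 + u2))) => lam; rewrite ltr_pdivrMr // => lam_gt.
have lam_gt0 : 0 < lam by case/andP: u1_01; case/andP: u2_01; nra.
rewrite pd_zero_setE /= !pd_phi_fin ?(lt_trans _ lam_gt0) // -EFinD lee_fin -subr_ge0.
do 2!split => //; have := pd_phir_excess_bounds _ _ _ lam_gt0 u1_01 u2_01 => /andP[lb _].
have K : 0 < lam * (lam + 1) by apply: mulr_gt0; lra.
by rewrite -(pmulr_rge0 _ K); nra.
Qed.

Lemma pd_zero_set_above_diag (u1 u2 : R) : 0 <= u1 <= 1 -> 0 <= u2 <= 1 -> 1 < u1 + u2 ->
  exists L, forall lam, L < lam -> ~ pd_zero_set lam (u1, u2).
Proof.
move=> u1_01 u2_01 s_gt1; have gap : 0 < u1 + u2 - 1 by lra.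
exists ((2 - (u1 + u2)) / (u1 + u2 - 1)) => lam; rewrite ltr_pdivrMr // => lam_gt.
have lam_gt0 : 0 < lam by case/andP: u1_01 => _; case/andP: u2_01; nra.
rewrite pd_zero_setE /= !pd_phi_fin ?(lt_trans _ lam_gt0) // -EFinD lee_fin -subr_ge0.
move=> [_ [_]]; have := pd_phir_excess_bounds _ _ _ lam_gt0 u1_01 u2_01 => /andP[_ ub].
have K : 0 < lam * (lam + 1) by apply: mulr_gt0; lra.
by rewrite -(pmulr_rge0 _ K) => ?; nra.
Qed.

Lemma pd_boundary_near_diag lam (u1 u2 : R) : 0 < lam -> 0 <= u1 <= 1 -> 0 <= u2 <= 1 ->
  pd_phir lam u1 + pd_phir lam u2 = pd_phir lam 0 -> `|u1 + u2 - 1| <= (lam + 1)^-1.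
Proof.
move=> lam_gt0 u1_01 u2_01 on_curve.
have := pd_phir_excess_bounds _ _ _ lam_gt0 u1_01 u2_01; rewrite on_curve subrr mulr0.
move=> /andP[lb ub]; have a0 : 0 < lam + 1 by lra.
rewrite -(ler_pM2l a0) mulfV ?gt_eqF // -[X in X * _](ger0_norm (ltW a0)) -normrM.
by rewrite ler_norml; apply/andP; split; lra.
Qed.

Lemma pd_boundary_through lam (u1 : R) : 0 < lam -> 0 <= u1 <= 1 ->
  exists2 u2, 0 <= u2 <= 1 & pd_phir lam u1 + pd_phir lam u2 = pd_phir lam 0.
Proof.
move=> lam_gt0 u1_01; have lam_gt : -1 < lam by lra.
have [phi_u1_0|phi_u1_neq0] := eqVneq (pd_phir lam u1) 0.
  by exists 0; rewrite ?lexx ?ler01 // phi_u1_0 add0r.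
have t_ge0 : 0 <= pd_phir lam 0 - pd_phir lam u1.
  by rewrite subr_ge0 pd_phir_le_phir0.
have t_lt : ((pd_phir lam 0 - pd_phir lam u1)%:E < pd_phi lam 0)%E.
  rewrite pd_phi_fin // lte_fin ltrBlDr ltrDl lt_neqAle eq_sym phi_u1_neq0.
  by case/andP: u1_01 => u1_ge0 _; rewrite -lee_fin -pd_phi_fin // pd_phi_ge0.
have [c /andP[c0 c1] phi_c] := pd_phir_onto _ _ t_ge0 t_lt.
by exists c; [rewrite (ltW c0) c1 | rewrite phi_c addrC subrK].
Qed.

Lemma pd_boundary_cvg_diag (eps : R) : 0 < eps -> exists L, forall lam, L < lam ->
  (forall u1 u2 : R, 0 <= u1 <= 1 -> 0 <= u2 <= 1 ->
     (pd_phi lam u1 + pd_phi lam u2 = pd_phi lam 0)%E -> `|u1 + u2 - 1| < eps) /\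
  (forall u1 : R, 0 <= u1 <= 1 -> exists u2 : R, 0 <= u2 <= 1 /\
     (pd_phi lam u1 + pd_phi lam u2 = pd_phi lam 0)%E /\ `|u1 + u2 - 1| < eps).
Proof.
move=> eps_gt0; exists eps^-1 => lam lam_gt.
have lam_gt0 : 0 < lam by rewrite (lt_trans _ lam_gt) ?invr_gt0.
have near_diag (u1 u2 : R) : 0 <= u1 <= 1 -> 0 <= u2 <= 1 ->
    pd_phir lam u1 + pd_phir lam u2 = pd_phir lam 0 -> `|u1 + u2 - 1| < eps.
  move=> u1_01 u2_01 /(pd_boundary_near_diag _ _ _ lam_gt0 u1_01 u2_01)/le_lt_trans; apply.
  by rewrite invf_plt ?posrE //; lra.
have phiE x : pd_phi lam x = (pd_phir lam x)%:E by rewrite pd_phi_fin //; lra.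
split=> [u1 u2 u1_01 u2_01|u1 u1_01].
  by rewrite !phiE -EFinD => -[]; exact: near_diag.
have [u2 u2_01 on_curve] := pd_boundary_through _ _ lam_gt0 u1_01.
by exists u2; rewrite !phiE -EFinD on_curve; split=> //; split=> //; exact: near_diag.
Qed.

End PowerDivergence.

Theorem theorem1 (R : realType) :
  (* (i) *)
  (forall lam : R, lam <= -1 ->
     pd_zero_set lam =
       [set p | 0 <= p.1 <= 1 /\ p.2 = 0] `|` [set p | p.1 = 0 /\ 0 <= p.2 <= 1])
  /\
  (* (ii) *)
  (forall lam : R, -1 < lam ->
     measurable (pd_zero_set lam) /\ (0 < @leb2 R (pd_zero_set lam))%E)
  /\
  (* (iii) pointwise convergence of the zero set to the triangle *)
  (forall u1 u2 : R, 0 <= u1 <= 1 -> 0 <= u2 <= 1 -> u1 + u2 < 1 ->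
     exists L : R, forall lam : R, L < lam -> pd_zero_set lam (u1, u2))
  /\
  (forall u1 u2 : R, 0 <= u1 <= 1 -> 0 <= u2 <= 1 -> 1 < u1 + u2 ->
     exists L : R, forall lam : R, L < lam -> ~ pd_zero_set lam (u1, u2))
  /\
  (* (iii) the boundary curve phi(u1) + phi(u2) = phi(0) in [0,1]^2 converges
     (in Hausdorff distance) to the segment u1 + u2 = 1 *)
  (forall eps : R, 0 < eps -> exists L : R, forall lam : R, L < lam ->
     (forall u1 u2 : R, 0 <= u1 <= 1 -> 0 <= u2 <= 1 ->
        (pd_phi lam u1 + pd_phi lam u2 = pd_phi lam 0)%E -> `|u1 + u2 - 1| < eps)
     /\
     (forall u1 : R, 0 <= u1 <= 1 -> exists u2 : R, 0 <= u2 <= 1 /\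
        (pd_phi lam u1 + pd_phi lam u2 = pd_phi lam 0)%E /\ `|u1 + u2 - 1| < eps)).
Proof.
split; first exact: pd_zero_set_le_m1.
split.
  by move=> lam lam_gt; split; [exact: measurable_pd_zero_set | exact: pd_zero_set_area_gt0].
split; first exact: pd_zero_set_below_diag.
split; first exact: pd_zero_set_above_diag.
exact: pd_boundary_cvg_diag.
Qed.
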